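(* Let $n\ge 3$ and let $\mathcal M=\Delta^{n-1}_{>0}=\{q\in\mathbb R^n: q_i>0,\ \sum_i q_i=1\}$ be the open probability simplex with Fisher--Rao metric $g_F(q)[v,w]=\sum_{i=1}^n v_iw_i/q_i$ for $v,w\in T_q\mathcal M=\{v\in\mathbb R^n:\sum_i v_i=0\}$. Let $\widehat V\in\mathrm{End}(\mathbb R^n)$ and decompose $\widehat V=\widehat S+\widehat F$ with $\widehat S^\top=\widehat S$, $\widehat F^\top=-\widehat F$. For any $\widehat W\in\mathrm{End}(\mathbb R^n)$ let $\mathcal T(\widehat W)\in\Omega^1(\mathcal M)$ denote the pullback $\iota^*\big(\bar\alpha^{\widehat W}|_{\mathbb S^{n-1}_+}\big)$, where $\bar\alpha^{\widehat W}$ is the $1$-form on the unit sphere $\mathbb S^{n-1}\subset\mathbb R^n$ given by $\bar\alpha^{\widehat W}_\rho(\eta)=\langle \eta,(I-\rho\rho^\top)\widehat W\rho\rangle$ for $\eta\in T_\rho\mathbb S^{n-1}$, $\mathbb S^{n-1}_+=\{\rho\in\mathbb S^{n-1}:\rho_i>0\ \forall i\}$, and $\iota:\mathcal M\to\mathbb S^{n-1}_+$, $\iota(q)=\sqrt q=(\sqrt{q_1},\dots,\sqrt{q_n})$. Set $\beta=\mathcal T(\widehat V)$, $\beta^{\widehat S}=\mathcal T(\widehat S)$, $\beta^{\widehat F}=\mathcal T(\widehat F)$, so that $\beta=\beta^{\widehat S}+\beta^{\widehat F}$. Then: (1) the smooth function $U(q):=\tfrac12(\sqrt q)^\top\widehat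 S\sqrt q$ on $\mathcal M$ satisfies $\beta^{\widehat S}=dU$; (2) there exists $\gamma\in\Omega^2(\mathcal M)$ such that $\beta^{\widehat F}=\delta_{g_F}\gamma$, where $\delta_{g_F}$ is the codifferential of $g_F$. Consequently $\beta=dU+\delta_{g_F}\gamma$.
   Context: $\langle\cdot,\cdot\rangle$ is the Euclidean inner product on $\mathbb R^n$. The sphere $\mathbb S^{n-1}$ carries the round metric induced by $\langle\cdot,\cdot\rangle$. *)

From HB Require Import structures.
From mathcomp Require Import all_boot all_order all_algebra.
From mathcomp Require Import all_classical all_reals all_analysis.
Set Implicit Arguments. Unset Strict Implicit. Unset Printing Implicit Defensive.
Import Order.TTheory GRing.Theory Num.Theory.
Import numFieldNormedType.Exports.
Local Open Scope ring_scope.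
Local Open Scope classical_set_scope.

(* We work with n = m.+1 and the global chart of the open simplex
   x = (q_1,...,q_m) |-> q = (x_1,...,x_m, 1 - sum_j x_j).                    *)

Section Defs.
Variable R : realType.
Variable m : nat.

Definition chart_dom : set 'rV[R]_m :=
  [set x | (forall j, 0 < x 0 j) /\ \sum_j x 0 j < 1].

Definition qof (x : 'rV[R]_m) : 'rV[R]_m.+1 :=
  \row_(i < m.+1) match unlift ord_max i with
                  | Some j => x 0 j
                  | None => 1 - \sum_j x 0 j
                  end.

Definition sqrtq (x : 'rV[R]_m) : 'rV[R]_m.+1 := map_mx Num.sqrt (qof x).

Definition ecoord (i : 'I_m) : 'rV[R]_m := delta_mx 0 i.

(* the 1-form on the sphere: alpha^W_rho(eta) = <eta, (I - rho rho^T) W rho>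
   (vectors written as rows) *)
Definition alphaW (W : 'M[R]_m.+1) (rho eta : 'rV[R]_m.+1) : R :=
  (eta *m (1%:M - rho^T *m rho) *m W *m rho^T) 0 0.

(* T(W) = iota^* (alpha^W restricted to S^{n-1}_+), in chart components:
   T(W)_i(x) = alpha^W_{sqrt q(x)} ( d(sqrt o q)_x (d/dx_i) ) *)
Definition Tform (W : 'M[R]_m.+1) (x : 'rV[R]_m) : 'rV[R]_m :=
  \row_(i < m) alphaW W (sqrtq x) (derive sqrtq x (ecoord i)).

Definition gF (q v w : 'rV[R]_m.+1) : R := \sum_k v 0 k * w 0 k / q 0 k.

Definition gmat (x : 'rV[R]_m) : 'M[R]_m :=
  \matrix_(i, j) gF (qof x) (derive qof x (ecoord i)) (derive qof x (ecoord j)).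

Definition dfun (f : 'rV[R]_m -> R) (x : 'rV[R]_m) : 'rV[R]_m :=
  \row_(i < m) derive f x (ecoord i).

(* codifferential of a 2-form gamma (gamma x antisymmetric, components gamma_ab)
   with respect to the metric g (standard coordinate formula):
   (delta gamma)_j = - g_{jk} (1/sqrt|g|) d_i ( sqrt|g| g^{ia} g^{kb} gamma_ab ) *)
Definition codiff2 (gamma : 'rV[R]_m -> 'M[R]_m) (x : 'rV[R]_m) : 'rV[R]_m :=
  \row_(j < m) - \sum_(k < m) gmat x j k / Num.sqrt (\det (gmat x)) *
     \sum_(i < m) derive (fun y => Num.sqrt (\det (gmat y)) *
                         (invmx (gmat y) *m gamma y *m invmx (gmat y)) i k)
                         x (ecoord i).

Definition iterD (vs : seq 'rV[R]_m) (f : 'rV[R]_m -> R) : 'rV[R]_m -> R :=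
  foldr (fun v g => fun y => derive g y v) f vs.

Definition smooth_on (D : set 'rV[R]_m) (f : 'rV[R]_m -> R) : Prop :=
  forall (vs : seq 'rV[R]_m) (x : 'rV[R]_m), D x -> differentiable (iterD vs f) x.

Definition two_form (gamma : 'rV[R]_m -> 'M[R]_m) : Prop :=
  (forall x, chart_dom x -> (gamma x)^T = - gamma x) /\
  (forall a b, smooth_on chart_dom (fun y => gamma y a b)).

End Defs.

From Pilot Require Import Defs.
From HB Require Import structures.
From mathcomp Require Import all_boot all_order all_algebra.
From mathcomp Require Import all_classical all_reals all_analysis.
From mathcomp Require Import ring lra.
Import Order.TTheory GRing.Theory Num.Theory.
Import numFieldNormedType.Exports.
Local Open Scope ring_scope.
Local Open Scope classical_set_scope.

(** In the chart, [rho = sqrt q] and the tangent vector [eta = d(sqrt q)(d/dx_i)]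
  has components [dq_a / (2 rho_a)]; since [sum_a dq_a = 0], [eta] is orthogonal
  to [rho], so [T(W)_i = eta^T W rho].  For symmetric [S] this is
  [d/dx_i (rho^T S rho / 2)].  For skew [F], put [T_abc = rho_a rho_b rho_c / P]
  with [P] the product of the first [m] coordinates [rho_l]; the antisymmetric
  field [Gam^ik = c (F_kn T_iik - F_in T_kki) + F_ki T_nki], [c = -1/(m-1)],
  satisfies [sum_i d_i Gam^ik = - rho_k (F rho)_k / (2 rho_n P)].  As
  [det g_F = 1 / prod_a q_a], the 2-form [gamma = sqrt|g|^-1 g Gam g] has
  [sqrt|g| g^-1 gamma g^-1 = Gam], and lowering the index of the divergence
  with [g_F] (using [rho^T F rho = 0]) gives back [eta^T F rho].  Smoothness
  holds because all functions involved are Laurent polynomials in the [rho_a]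
  on the chart domain, a class closed under differentiation. *)

Section NearDifferentiable.
Context {R : realType} {V W : normedModType R}.

Lemma differentiable_near0 (h : V -> W) (x : V) :
  (\forall y \near x, h y = 0) -> differentiable h x.
Proof.
move=> h0.
have hx : h x = 0 by apply: nbhs_singleton h0.
have P : h \o shift x = cst (h x) + (\0 : {linear V -> W}) +o_ (nbhs (0:V)) id.
  apply/eqaddoP => e e0 /=.
  move/nbhs0P: h0; apply: filterS => k hk.
  have -> : (h \o +%R^~ x - (cst (h x) + \0)) k = 0.
    by rewrite !fctE /= (addrC k x) hk hx addr0 subr0.
  by rewrite normr0 mulr_ge0 // ltW.
have c0 : continuous (\0 : {linear V -> W}) by move=> ?; exact: cst_continuous.
by apply/diff_locallyP; rewrite (diff_unique _ P).
Qed.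

Lemma near_eq_differentiable (f g : V -> W) (x : V) :
  (\forall y \near x, f y = g y) -> differentiable f x -> differentiable g x.
Proof.
move=> fg df.
have -> : g = f + (g - f) by rewrite addrC subrK.
apply: differentiableD => //; apply: differentiable_near0.
by apply: filterS fg => y /= fg; rewrite !fctE fg subrr.
Qed.

End NearDifferentiable.

Section PointwiseDerive.
Context {R : realType} {V : normedModType R}.
Implicit Types (f g : V -> R) (x v : V).

Lemma differentiable_add f g x : differentiable f x -> differentiable g x ->
  differentiable (fun y => f y + g y) x.
Proof. by move=> df dg; exact: (differentiableD df dg). Qed.

Lemma differentiable_opp f x : differentiable f x ->
  differentiable (fun y => - f y) x.
Proof. by move=> df; exact: (differentiableN df). Qed.

Lemma differentiable_mul f g x : differentiable f x -> differentiable g x ->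
  differentiable (fun y => f y * g y) x.
Proof. by move=> df dg; exact: (differentiableM df dg). Qed.

Lemma differentiable_sumr n (F : 'I_n -> V -> R) x :
  (forall i, differentiable (F i) x) ->
  differentiable (fun y => \sum_(i < n) F i y) x.
Proof. by move=> dF; rewrite -fct_sumE; exact: differentiable_sum. Qed.

Lemma differentiable_prodr (I : Type) (s : seq I) (F : I -> V -> R) x :
  (forall i, differentiable (F i) x) ->
  differentiable (fun y => \prod_(i <- s) F i y) x.
Proof.
move=> dF; elim: s => [|a s IH].
  by under eq_fun do rewrite big_nil; exact: differentiable_cst.
by under eq_fun do rewrite big_cons; exact: differentiable_mul.
Qed.

Lemma derive_add f g x v : differentiable f x -> differentiable g x ->
  derive (fun y => f y + g y) x v = derive f x v + derive g x v.
Proof.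
by move=> df dg; rewrite (deriveD (diff_derivable (v:=v) df) (diff_derivable (v:=v) dg)).
Qed.

Lemma derive_opp f x v : differentiable f x ->
  derive (fun y => - f y) x v = - derive f x v.
Proof. by move=> df; rewrite (deriveN (diff_derivable (v:=v) df)). Qed.

Lemma derive_mul f g x v : differentiable f x -> differentiable g x ->
  derive (fun y => f y * g y) x v = f x * derive g x v + g x * derive f x v.
Proof.
by move=> df dg; rewrite (deriveM (diff_derivable (v:=v) df) (diff_derivable (v:=v) dg)).
Qed.

Lemma derive_mull (c : R) f x v : differentiable f x ->
  derive (fun y => c * f y) x v = c * derive f x v.
Proof.
move=> df; rewrite (derive_mul _ _ _ v (differentiable_cst c x) df).
by rewrite derive_cst mulr0 addr0.
Qed.

Lemma derive_inv f x v : differentiable f x -> f x != 0 ->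
  derive (fun y => (f y)^-1) x v = - (f x) ^- 2 * derive f x v.
Proof. by move=> df f0; rewrite (deriveV f0 (diff_derivable (v:=v) df)). Qed.

Lemma derive_sumr n (F : 'I_n -> V -> R) x v :
  (forall i, differentiable (F i) x) ->
  derive (fun y => \sum_(i < n) F i y) x v = \sum_(i < n) derive (F i) x v.
Proof.
by move=> dF; rewrite -fct_sumE derive_sum // => i; exact: diff_derivable.
Qed.

Lemma derive_prodr (I : Type) (s : seq I) (F : I -> V -> R) x v :
  (forall i, differentiable (F i) x) -> (forall i, F i x != 0) ->
  derive (fun y => \prod_(i <- s) F i y) x v =
  (\prod_(i <- s) F i x) * \sum_(i <- s) derive (F i) x v / F i x.
Proof.
move=> dF nF; elim: s => [|a s IH].
  by under eq_fun do rewrite big_nil; rewrite derive_cst !big_nil mulr0.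
under eq_fun do rewrite big_cons.
rewrite derive_mul //; last exact: differentiable_prodr.
by rewrite IH !big_cons; field; apply: nF.
Qed.

End PointwiseDerive.

Lemma big_ord_recr_lift (T : Type) (idx : T) (op : Monoid.law idx) n
    (F : 'I_n.+1 -> T) :
  \big[op/idx]_i F i = op (\big[op/idx]_(i < n) F (lift ord_max i)) (F ord_max).
Proof.
rewrite big_ord_recr /=; congr (op _ _); apply: eq_bigr => i _.
by congr F; apply/val_inj; exact: (esym (lift_max i)).
Qed.

Section BilinearForms.
Context {R : numFieldType}.

Lemma bilin_mxE n (r s : 'rV[R]_n) (M : 'M[R]_n) :
  (r *m M *m s^T) 0 0 = \sum_a r 0 a * \sum_b M a b * s 0 b.
Proof.
rewrite mxE; under eq_bigr do rewrite !mxE mulr_suml.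
rewrite exchange_big /=; apply: eq_bigr => a _; rewrite mulr_sumr.
by apply: eq_bigr => b _; rewrite mulrA.
Qed.

Lemma mx11_trmx (M : 'M[R]_1) : M 0 0 = M^T 0 0.
Proof. by rewrite mxE. Qed.

Lemma bilin_sym n (S : 'M[R]_n) (r s : 'rV[R]_n) : S^T = S ->
  (r *m S *m s^T) 0 0 = (s *m S *m r^T) 0 0.
Proof. by move=> hS; rewrite mx11_trmx !trmx_mul trmxK hS mulmxA. Qed.

Lemma bilin_skew_eq0 n (F : 'M[R]_n) (r : 'rV[R]_n) : F^T = - F ->
  (r *m F *m r^T) 0 0 = 0.
Proof.
move=> hF; apply/eqP; rewrite -eqNr; apply/eqP.
by rewrite [RHS]mx11_trmx !trmx_mul trmxK hF mulmxA mulmxN mulNmx [RHS]mxE.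
Qed.

Lemma skew_mxE n (F : 'M[R]_n) a b : F^T = - F -> F b a = - F a b.
Proof. by move=> hF; have := congr1 (fun M : 'M[R]_n => M a b) hF; rewrite !mxE. Qed.

Lemma skew_mx_diag n (F : 'M[R]_n) a : F^T = - F -> F a a = 0.
Proof. by move=> hF; apply/eqP; rewrite -eqNr -skew_mxE. Qed.

End BilinearForms.

Section RankOne.
Context {R : comRingType} {k : nat}.

Lemma det_add_rank1 (A Ai : 'M[R]_k) (u w : 'rV[R]_k) :
  A *m Ai = 1%:M -> \det (A + u^T *m w) = \det A * (1 + (w *m Ai *m u^T) 0 0).
Proof.
move=> AAi.
pose M := block_mx (1%:M : 'M[R]_1) w (- u^T) A.
pose L1 := block_mx (1%:M : 'M[R]_1) 0 u^T (1%:M : 'M[R]_k).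
pose L2 := block_mx (1%:M : 'M[R]_1) 0 (Ai *m u^T) (1%:M : 'M[R]_k).
have E1 : L1 *m M = block_mx 1%:M w 0 (A + u^T *m w).
  by rewrite /L1 /M mulmx_block !mul1mx !mulmx1 !mul0mx !addr0 subrr addrC.
have E2 : M *m L2 = block_mx (1%:M + w *m Ai *m u^T) w 0 A.
  by rewrite /L2 /M mulmx_block !mul1mx !mulmx1 !mulmx0 !add0r !mulmxA AAi mul1mx addNr.
have dL1 : \det L1 = 1 by rewrite /L1 det_lblock !det1 mulr1.
have dL2 : \det L2 = 1 by rewrite /L2 det_lblock !det1 mulr1.
have := congr1 determinant E1; rewrite det_mulmx dL1 mul1r det_ublock det1 mul1r.
move=> <-; have := congr1 determinant E2; rewrite det_mulmx dL2 mulr1 det_ublock => ->.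
by rewrite det_mx11 mulrC; congr (_ * _); rewrite mxE [X in X + _]mxE eqxx.
Qed.

End RankOne.

Section ProbabilitySimplex.
Context {R : realType} {m : nat}.
Local Notation D := (chart_dom (R:=R) (m:=m)).
Local Notation imax := (@ord_max m).
Local Notation ilift := (@lift m.+1 ord_max).
Implicit Types (x y v : 'rV[R]_m) (a b c : 'I_m.+1) (W S F : 'M[R]_m.+1).

Definition qcoord a y : R := qof y 0 a.
Definition rho a y : R := Num.sqrt (qcoord a y).
Definition dqcoord a v : R :=
  match unlift imax a with Some j => v 0 j | None => - \sum_j v 0 j end.
Definition dsqrtq v x : 'rV[R]_m.+1 := \row_a (dqcoord a v / (2 * rho a x)).

Lemma qcoord_fun a : qcoord a =
  fun y => match unlift imax a with Some j => y 0 j | None => 1 - \sum_j y 0 j end.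
Proof. by apply: funext => y; rewrite /qcoord /qof mxE. Qed.

Lemma qcoord_lift l y : qcoord (ilift l) y = y 0 l.
Proof. by rewrite qcoord_fun liftK. Qed.

Lemma qcoord_max y : qcoord imax y = 1 - \sum_j y 0 j.
Proof. by rewrite qcoord_fun unlift_none. Qed.

Lemma sqrtqE y a : sqrtq y 0 a = rho a y.
Proof. by rewrite /sqrtq mxE. Qed.

Lemma dsqrtqE v x a : dsqrtq v x 0 a = dqcoord a v / (2 * rho a x).
Proof. by rewrite mxE. Qed.

Lemma dqcoord_lift l v : dqcoord (ilift l) v = v 0 l.
Proof. by rewrite /dqcoord liftK. Qed.

Lemma dqcoord_max v : dqcoord imax v = - \sum_j v 0 j.
Proof. by rewrite /dqcoord unlift_none. Qed.

Lemma sum_dqcoord v : \sum_a dqcoord a v = 0.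
Proof.
rewrite big_ord_recr_lift /= dqcoord_max; under eq_bigr do rewrite dqcoord_lift.
by rewrite subrr.
Qed.

Lemma dqcoord_ecoord_lift l i : dqcoord (ilift l) (ecoord R i) = (l == i)%:R.
Proof. by rewrite dqcoord_lift /ecoord mxE eqxx. Qed.

Lemma dqcoord_ecoord_max i : dqcoord imax (ecoord R i) = -1.
Proof.
rewrite dqcoord_max (bigD1 i) //= /ecoord mxE !eqxx big1 ?addr0 // => j /negPf ji.
by rewrite mxE ji.
Qed.

Lemma sum_dqcoord_ecoord a (G : 'I_m -> R) :
  \sum_k dqcoord a (ecoord R k) * G k = dqcoord a (\row_k G k).
Proof.
case: (unliftP imax a) => [l ->|->].
  rewrite dqcoord_lift mxE (bigD1 l) //= dqcoord_ecoord_lift eqxx mul1r.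
  rewrite big1 ?addr0 // => k /negPf kl.
  by rewrite dqcoord_ecoord_lift eq_sym kl mul0r.
rewrite dqcoord_max -sumrN; apply: eq_bigr => k _.
by rewrite dqcoord_ecoord_max mxE mulN1r.
Qed.

Lemma chart_domP y : D y <-> forall a, 0 < qcoord a y.
Proof.
split=> [[pos sum1] a|pos]; first case: (unliftP imax a) => [l ->|->].
- by rewrite qcoord_lift.
- by rewrite qcoord_max subr_gt0.
split=> [l|]; first by rewrite -qcoord_lift.
by rewrite -subr_gt0 -qcoord_max.
Qed.

Lemma derive_coord (j : 'I_m) x v : derive (fun y : 'rV[R]_m => y 0 j) x v = v 0 j.
Proof.
have := derive_mx (M := id) (t := x) (v := v) (@derivable_id _ _ x v).
by rewrite derive_id => /(congr1 (fun M : 'rV[R]_m => M 0 j)); rewrite mxE.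
Qed.

Lemma differentiable_qcoord a x : differentiable (qcoord a) x.
Proof.
rewrite qcoord_fun; case: (unlift imax a) => [j|].
  exact: differentiable_coord.
apply: differentiable_add; first exact: differentiable_cst.
by apply/differentiable_opp/differentiable_sumr => j; exact: differentiable_coord.
Qed.

Lemma derive_qcoord a x v : derive (qcoord a) x v = dqcoord a v.
Proof.
rewrite qcoord_fun /dqcoord; case: (unlift imax a) => [j|].
  exact: derive_coord.
have dsum : differentiable (fun y : 'rV[R]_m => \sum_j y 0 j) x.
  by apply: differentiable_sumr => j; exact: differentiable_coord.
rewrite derive_add; [|exact: differentiable_cst|exact: differentiable_opp].
rewrite derive_cst add0r derive_opp // derive_sumr => [|j].
  by under eq_bigr do rewrite derive_coord.
exact: differentiable_coord.
Qed.

Lemma near_chart_dom x : D x -> \forall y \near x, D y.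
Proof.
move=> /chart_domP Dx.
have : \forall y \near x, forall a, 0 < qcoord a y.
  apply: (@filter_forall _ _ (fun a y => 0 < qcoord a y) (nbhs x)) => a.
  apply: (cvgr_gt (f := qcoord a) (qcoord a x)); last exact: Dx.
  exact: differentiable_continuous (differentiable_qcoord a x).
by apply: filterS => y /chart_domP.
Qed.

Lemma rho_gt0 a y : D y -> 0 < rho a y.
Proof. by move=> /chart_domP Dy; rewrite sqrtr_gt0. Qed.

Lemma rho_neq0 a y : D y -> rho a y != 0.
Proof. by move=> Dy; rewrite gt_eqF // rho_gt0. Qed.

Lemma rho_sqr a y : D y -> rho a y ^+ 2 = qcoord a y.
Proof. by move=> /chart_domP Dy; rewrite sqr_sqrtr // ltW. Qed.

Lemma differentiable_rho a x : D x -> differentiable (rho a) x.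
Proof.
move=> /chart_domP Dx; apply: (differentiable_comp (differentiable_qcoord a x)).
by apply/derivable1_diffP; have [] := is_derive1_sqrt (Dx a).
Qed.

Lemma derive_rho a x v : D x -> derive (rho a) x v = dqcoord a v / (2 * rho a x).
Proof.
move=> Dx; have q0 : 0 < qcoord a x by move/chart_domP: Dx.
have ds : differentiable Num.sqrt (qcoord a x).
  by apply/derivable1_diffP; have [] := is_derive1_sqrt q0.
rewrite deriveE; last exact: differentiable_rho.
rewrite /rho (_ : (fun y => Num.sqrt (qcoord a y)) = Num.sqrt \o qcoord a) //.
rewrite diff_comp //; last exact: differentiable_qcoord.
rewrite /= -(@deriveE _ _ _ (qcoord a) x v (differentiable_qcoord a x)).
rewrite derive_qcoord deriv1E; last exact/derivable1_diffP.
by rewrite derive1E derive_sqrt // mulrC.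
Qed.

Lemma derive_sqrtq x v : D x -> derive (@sqrtq R m) x v = dsqrtq v x.
Proof.
move=> Dx.
have sqrtq_entry (i : 'I_1) a : (fun y => sqrtq y i a) = rho a.
  by apply: funext => y; rewrite (ord1 i) sqrtqE.
rewrite derive_mx; last first.
  apply/derivable_mxP => i a; rewrite sqrtq_entry.
  exact/diff_derivable/differentiable_rho.
by apply/rowP => a; rewrite !mxE sqrtq_entry derive_rho.
Qed.

Lemma derive_qof x v : derive (@qof R m) x v = \row_a dqcoord a v.
Proof.
have qof_entry (i : 'I_1) a : (fun y => qof y i a) = qcoord a.
  by apply: funext => y; rewrite (ord1 i).
rewrite derive_mx; last first.
  apply/derivable_mxP => i a; rewrite qof_entry.
  exact/diff_derivable/differentiable_qcoord.
by apply/rowP => a; rewrite !mxE qof_entry derive_qcoord.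
Qed.

Lemma dsqrtq_orthogonal x v : D x -> (dsqrtq v x *m (sqrtq x)^T) 0 0 = 0.
Proof.
move=> Dx; rewrite mxE (eq_bigr (fun a => dqcoord a v / 2)).
  by rewrite -mulr_suml sum_dqcoord mul0r.
move=> a _; rewrite [(sqrtq x)^T a 0]mxE sqrtqE mxE.
by have := rho_neq0 a x Dx; move: (rho a x) => r r0; field.
Qed.

Lemma alphaW_tangent W (r e : 'rV[R]_m.+1) : (e *m r^T) 0 0 = 0 ->
  alphaW W r e = (e *m W *m r^T) 0 0.
Proof.
move=> er; rewrite /alphaW mulmxBr mulmx1 mulmxA (mx11_scalar (e *m r^T)) er.
by rewrite mul_scalar_mx scale0r subr0.
Qed.

Lemma Tform_tangent W x : D x ->
  Tform W x = \row_i (dsqrtq (ecoord R i) x *m W *m (sqrtq x)^T) 0 0.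
Proof.
move=> Dx; apply/rowP => i.
by rewrite [LHS]mxE [RHS]mxE derive_sqrtq // alphaW_tangent // dsqrtq_orthogonal.
Qed.

Lemma Tform_add W1 W2 x : Tform (W1 + W2) x = Tform W1 x + Tform W2 x.
Proof. by apply/rowP => i; rewrite !mxE /alphaW mulmxDr mulmxDl mxE. Qed.

Inductive rho_laurent : ('rV[R]_m -> R) -> Prop :=
| rho_laurentC (c : R) : rho_laurent (fun _ => c)
| rho_laurent_rho a : rho_laurent (rho a)
| rho_laurentV a : rho_laurent (fun y => (rho a y)^-1)
| rho_laurentD {f g} : rho_laurent f -> rho_laurent g ->
    rho_laurent (fun y => f y + g y)
| rho_laurentM {f g} : rho_laurent f -> rho_laurent g ->
    rho_laurent (fun y => f y * g y)
| rho_laurent_eq {f g} : rho_laurent f -> (forall y, D y -> f y = g y) ->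
    rho_laurent g.

Lemma rho_laurent_derive f : rho_laurent f ->
  (forall x, D x -> differentiable f x) /\
  (forall v, rho_laurent (fun y => derive f y v)).
Proof.
elim=> {f}.
- move=> c; split=> [x _|v]; first exact: differentiable_cst.
  by apply: (rho_laurent_eq (rho_laurentC 0)) => y _; rewrite derive_cst.
- move=> a; split=> [x Dx|v]; first exact: differentiable_rho.
  apply: (rho_laurent_eq (rho_laurentM (rho_laurentC (dqcoord a v / 2))
                                        (rho_laurentV a))) => y Dy.
  by rewrite derive_rho // invfM mulrA.
- move=> a; split=> [x Dx|v].
    by apply: differentiableV; [exact: differentiable_rho | exact: rho_neq0].
  apply: (rho_laurent_eq (rho_laurentM (rho_laurentC (- dqcoord a v / 2))
    (rho_laurentM (rho_laurentV a) (rho_laurentM (rho_laurentV a) (rho_laurentV a)))))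
    => y Dy.
  rewrite derive_inv ?rho_neq0 ?derive_rho //; last exact: differentiable_rho.
  by have := rho_neq0 a y Dy; move: (rho a y) => r r0; field.
- move=> f g _ [df Df] _ [dg Dg]; split=> [x Dx|v].
    by apply: differentiable_add; auto.
  apply: (rho_laurent_eq (rho_laurentD (Df v) (Dg v))).
  by move=> y Dy; rewrite derive_add; auto.
- move=> f g Lf [df Df] Lg [dg Dg]; split=> [x Dx|v].
    by apply: differentiable_mul; auto.
  apply: (rho_laurent_eq
    (rho_laurentD (rho_laurentM Lf (Dg v)) (rho_laurentM Lg (Df v)))).
  by move=> y Dy; rewrite derive_mul; auto.
- move=> f g _ [df Df] fg; split=> [x Dx|v].
    apply: (near_eq_differentiable _ _ _ _ (df x Dx)).
    by apply: filterS (near_chart_dom x Dx) => y; exact: fg.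
  apply: (rho_laurent_eq (Df v)) => y Dy; apply: near_eq_derive.
  by apply: filterS (near_chart_dom y Dy) => z; exact: fg.
Qed.

Lemma rho_laurent_smooth f : rho_laurent f -> smooth_on D f.
Proof.
move=> Lf vs x Dx.
suff /rho_laurent_derive[+ _] : rho_laurent (Defs.iterD vs f) by apply.
elim: vs => [|v vs IH] //=; exact: (rho_laurent_derive _ IH).2 v.
Qed.

Lemma rho_laurent_sum k (F : 'I_k -> 'rV[R]_m -> R) :
  (forall i, rho_laurent (F i)) -> rho_laurent (fun y => \sum_(i < k) F i y).
Proof.
elim: k F => [|k IH] F LF.
  by apply: (rho_laurent_eq (rho_laurentC 0)) => y _; rewrite big_ord0.
apply: (rho_laurent_eq (rho_laurentD (IH _ (fun i => LF (widen_ord (leqnSn k) i)))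
                                     (LF ord_max))).
by move=> y _; rewrite big_ord_recr.
Qed.

Lemma rho_laurent_prod k (F : 'I_k -> 'rV[R]_m -> R) :
  (forall i, rho_laurent (F i)) -> rho_laurent (fun y => \prod_(i < k) F i y).
Proof.
elim: k F => [|k IH] F LF.
  by apply: (rho_laurent_eq (rho_laurentC 1)) => y _; rewrite big_ord0.
apply: (rho_laurent_eq (rho_laurentM (IH _ (fun i => LF (widen_ord (leqnSn k) i)))
                                     (LF ord_max))).
by move=> y _; rewrite big_ord_recr.
Qed.

Definition mxrho (W : 'M[R]_m.+1) a y : R := \sum_b W a b * rho b y.

Definition potential (S : 'M[R]_m.+1) y : R :=
  2^-1 * (sqrtq y *m S *m (sqrtq y)^T) 0 0.

Lemma quad_sqrtq W y :
  (sqrtq y *m W *m (sqrtq y)^T) 0 0 = \sum_a rho a y * mxrho W a y.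
Proof.
rewrite bilin_mxE; apply: eq_bigr => a _.
by rewrite sqrtqE; congr (_ * _); apply: eq_bigr => b _; rewrite sqrtqE.
Qed.

Lemma potentialE S y : potential S y = 2^-1 * \sum_a rho a y * mxrho S a y.
Proof. by rewrite /potential quad_sqrtq. Qed.

Lemma potential_rho_laurent S : rho_laurent (potential S).
Proof.
apply: (rho_laurent_eq (rho_laurentM (rho_laurentC 2^-1) (rho_laurent_sum _ _
  (fun a : 'I_m.+1 => rho_laurentM (rho_laurent_rho a) (rho_laurent_sum _ _
  (fun b : 'I_m.+1 => rho_laurentM (rho_laurentC (S a b)) (rho_laurent_rho b))))))).
by move=> y _; rewrite potentialE.
Qed.

Lemma differentiable_mxrho W a x : D x -> differentiable (mxrho W a) x.
Proof.
move=> Dx; apply: differentiable_sumr => b.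
by apply: differentiable_mul; [exact: differentiable_cst | exact: differentiable_rho].
Qed.

Lemma derive_mxrho W a x v : D x ->
  derive (mxrho W a) x v = \sum_b W a b * (dqcoord b v / (2 * rho b x)).
Proof.
move=> Dx; rewrite /mxrho derive_sumr => [|b].
  apply: eq_bigr => b _; rewrite derive_mull ?derive_rho //.
  exact: differentiable_rho.
by apply: differentiable_mul; [exact: differentiable_cst | exact: differentiable_rho].
Qed.

Lemma derive_potential W x v : D x -> derive (potential W) x v =
  2^-1 * ((dsqrtq v x *m W *m (sqrtq x)^T) 0 0 + (sqrtq x *m W *m (dsqrtq v x)^T) 0 0).
Proof.
move=> Dx.
have drho_mxrho a : differentiable (fun y => rho a y * mxrho W a y) x.
  by apply: differentiable_mul;
    [exact: differentiable_rho | exact: differentiable_mxrho].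
have -> : potential W = fun y => 2^-1 * \sum_a rho a y * mxrho W a y.
  by apply: funext => y; rewrite potentialE.
rewrite derive_mull; last exact: differentiable_sumr.
rewrite derive_sumr // !bilin_mxE -big_split /=; congr (_ * _).
apply: eq_bigr => a _.
rewrite derive_mul; [|exact: differentiable_rho|exact: differentiable_mxrho].
rewrite derive_mxrho // derive_rho // dsqrtqE sqrtqE [RHS]addrC; congr (_ + _).
  by congr (_ * _); apply: eq_bigr => b _; rewrite dsqrtqE.
by rewrite mulrC; congr (_ * _); apply: eq_bigr => b _; rewrite sqrtqE.
Qed.

Lemma Tform_sym_exact S x : S^T = S -> D x -> Tform S x = dfun (potential S) x.
Proof.
move=> hS Dx; apply/rowP => i.
rewrite Tform_tangent // /dfun [LHS]mxE [RHS]mxE derive_potential //.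
by rewrite [X in _ + X]bilin_sym //; field.
Qed.

Lemma gmat_dqcoord x j k : gmat x j k =
  \sum_a dqcoord a (ecoord R j) * dqcoord a (ecoord R k) / qcoord a x.
Proof.
rewrite /gmat mxE /gF !derive_qof; apply: eq_bigr => a _.
by rewrite /qcoord; congr (_ * _ / _); rewrite mxE.
Qed.

Lemma gmat_chart x j k : gmat x j k = (j == k)%:R / x 0 j + (qcoord imax x)^-1.
Proof.
rewrite gmat_dqcoord big_ord_recr_lift /= !dqcoord_ecoord_max mulN1r opprK mul1r.
congr (_ + _); rewrite (bigD1 j) //= !dqcoord_ecoord_lift eqxx mul1r qcoord_lift.
rewrite eq_sym big1 ?addr0 // => l /negPf lj.
by rewrite dqcoord_ecoord_lift lj !mul0r.
Qed.

Lemma gmat_sym x : (gmat x)^T = gmat x.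
Proof.
apply/matrixP => i j; rewrite mxE !gmat_dqcoord.
by apply: eq_bigr => a _; rewrite [dqcoord a (ecoord R j) * _]mulrC.
Qed.

Lemma det_gmat x : D x -> \det (gmat x) = (\prod_a qcoord a x)^-1.
Proof.
move=> Dx; have /chart_domP q0 := Dx.
pose A := diag_mx (\row_j (x 0 j)^-1).
pose Ai := diag_mx (\row_j x 0 j).
pose u := const_mx (qcoord imax x)^-1 : 'rV[R]_m.
pose w := const_mx 1 : 'rV[R]_m.
have x0 j : x 0 j != 0 by rewrite -qcoord_lift gt_eqF.
have -> : gmat x = A + u^T *m w.
  apply/matrixP => j k; rewrite gmat_chart !mxE big_ord1 !mxE mulr1.
  by case: (eqVneq j k) => [->|jk] /=; rewrite ?mulr1n ?mulr0n ?mul1r ?mul0r.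
have AAi : A *m Ai = 1%:M.
  apply/matrixP => j k; rewrite mul_diag_mx !mxE.
  by case: (eqVneq j k) => [->|jk] /=; rewrite ?mulr1n ?mulr0n ?mulr0 ?mulVf.
rewrite (det_add_rank1 _ _ u w AAi) det_diag.
have -> : (w *m Ai *m u^T) 0 0 = (\sum_j x 0 j) / qcoord imax x.
  rewrite mulr_suml mxE; apply: eq_bigr => j _.
  rewrite !mxE (bigD1 j) //= big1 ?addr0 => [|l lj]; last first.
    by rewrite /Ai !mxE (negPf lj) mulr0n mulr0.
  by rewrite /w /Ai !mxE eqxx mulr1n mul1r.
rewrite [in RHS]big_ord_recr_lift /=; under eq_bigr do rewrite mxE.
under [X in _ = (X * _)^-1]eq_bigr do rewrite qcoord_lift.
have sum1 : \sum_j x 0 j = 1 - qcoord imax x by rewrite qcoord_max opprB addrC subrK.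
have P0 : \prod_j x 0 j != 0 by apply/prodf_neq0 => j _.
rewrite prodfV sum1; move: P0 (q0 imax); move: (\prod_j x 0 j) (qcoord imax x).
by move=> P q P0 /gt_eqF q0'; field; rewrite q0' P0.
Qed.

Lemma prod_rho_gt0 x : D x -> 0 < \prod_a rho a x.
Proof. by move=> Dx; apply: prodr_gt0 => a _; exact: rho_gt0. Qed.

Lemma sqrt_det_gmat x : D x -> Num.sqrt (\det (gmat x)) = (\prod_a rho a x)^-1.
Proof.
move=> Dx; have P0 := prod_rho_gt0 x Dx; rewrite det_gmat //.
have -> : \prod_a qcoord a x = (\prod_a rho a x) ^+ 2.
  by rewrite -prodrXl; apply: eq_bigr => a _; rewrite rho_sqr.
by rewrite sqrtrV ?exprn_ge0 ?ltW // sqrtr_sqr gtr0_norm.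
Qed.

Lemma gmat_unit x : D x -> gmat x \in unitmx.
Proof.
move=> /[dup] Dx /chart_domP q0; rewrite unitmxE det_gmat // unitfE invr_eq0.
by apply/prodf_neq0 => a _; rewrite gt_eqF.
Qed.

Lemma rho_laurent_gmat j k : rho_laurent (fun y => gmat y j k).
Proof.
apply: (rho_laurent_eq (rho_laurent_sum _ _ (fun a => rho_laurentM
  (rho_laurentC (dqcoord a (ecoord R j) * dqcoord a (ecoord R k)))
  (rho_laurentM (rho_laurentV a) (rho_laurentV a))))).
move=> y Dy; rewrite gmat_dqcoord; apply: eq_bigr => a _.
by rewrite -invfM -expr2 rho_sqr.
Qed.

Definition rho_headV y : R := \prod_(l < m) (rho (ilift l) y)^-1.

Definition rho_cubic a b c y : R := rho a y * rho b y * rho c y * rho_headV y.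

Definition coexact_coef : R := - (m.-1)%:R^-1.

(* [Gam^ik = sqrt|g| g^ia g^kb gamma_ab], the field differentiated in [codiff2];
   [coexact_coef] makes its divergence proportional to [(F rho)_k]. *)
Definition gam_dens F i k y : R :=
  coexact_coef * F (ilift k) imax * rho_cubic (ilift i) (ilift i) (ilift k) y
  - coexact_coef * F (ilift i) imax * rho_cubic (ilift k) (ilift k) (ilift i) y
  + F (ilift k) (ilift i) * rho_cubic imax (ilift k) (ilift i) y.

Definition gam F y : 'M[R]_m :=
  (\prod_a rho a y) *: (gmat y *m (\matrix_(i, k) gam_dens F i k y) *m gmat y).

Lemma coexact_coefE : (2 <= m)%N -> coexact_coef * (m%:R - 1) = -1.
Proof.
move=> hm.
have -> : (m%:R - 1 : R) = (m.-1)%:R by rewrite -{1}(prednK (ltnW hm)) -natr1 addrK.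
by rewrite mulNr mulVf // pnatr_eq0; case: (m) hm => [|[|n]].
Qed.

Lemma prod_rho_headV x : D x -> \prod_a rho a x * rho_headV x = rho imax x.
Proof.
move=> Dx; rewrite big_ord_recr_lift /= /rho_headV prodfV.
have : \prod_(l < m) rho (ilift l) x != 0 by apply/prodf_neq0 => l _; exact: rho_neq0.
by move: (\prod_(l < m) _) => p p0; field.
Qed.

Lemma differentiable_rho_headV x : D x -> differentiable rho_headV x.
Proof.
move=> Dx; apply: differentiable_prodr => l.
by apply: differentiableV; [exact: differentiable_rho | exact: rho_neq0].
Qed.

Lemma derive_rho_headV x v : D x -> derive rho_headV x v =
  rho_headV x * \sum_(l < m) - dqcoord (ilift l) v / (2 * qcoord (ilift l) x).
Proof.
move=> Dx; rewrite /rho_headV derive_prodr => [|l|l]; first last.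
- by rewrite invr_eq0 rho_neq0.
- by apply: differentiableV; [exact: differentiable_rho | exact: rho_neq0].
congr (_ * _); apply: eq_bigr => l _.
rewrite derive_inv ?rho_neq0 ?derive_rho -?(rho_sqr _ _ Dx) //; last first.
  exact: differentiable_rho.
by have := rho_neq0 (ilift l) x Dx; move: (rho (ilift l) x) => r r0; field.
Qed.

Lemma differentiable_rho_cubic a b c x : D x -> differentiable (rho_cubic a b c) x.
Proof.
move=> Dx; apply: differentiable_mul; last exact: differentiable_rho_headV.
by apply: differentiable_mul; [apply: differentiable_mul|]; exact: differentiable_rho.
Qed.

Lemma derive_rho_cubic a b c x v : D x -> derive (rho_cubic a b c) x v =
  rho_cubic a b c x *
    (dqcoord a v / (2 * qcoord a x) + dqcoord b v / (2 * qcoord b x)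
     + dqcoord c v / (2 * qcoord c x)
     + \sum_(l < m) - dqcoord (ilift l) v / (2 * qcoord (ilift l) x)).
Proof.
move=> Dx.
have da := differentiable_rho a x Dx; have db := differentiable_rho b x Dx.
have dc := differentiable_rho c x Dx.
have dab : differentiable (fun y => rho a y * rho b y) x by exact: differentiable_mul.
have dabc : differentiable (fun y => rho a y * rho b y * rho c y) x.
  exact: differentiable_mul.
have dQ := differentiable_rho_headV x Dx.
rewrite /rho_cubic !derive_mul // derive_rho_headV // !derive_rho // -!(rho_sqr _ _ Dx).
have := rho_neq0 a x Dx; have := rho_neq0 b x Dx; have := rho_neq0 c x Dx.
move: (rho a x) (rho b x) (rho c x) (rho_headV x) (\sum_(l < m) _).
by move=> ra rb rc q s h1 h2 h3; field; rewrite h1 h2 h3.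
Qed.

Lemma gam_dens_skew F i k y : F^T = - F -> gam_dens F k i y = - gam_dens F i k y.
Proof.
by move=> hF; rewrite /gam_dens /rho_cubic (skew_mxE _ F (ilift k) (ilift i) hF); ring.
Qed.

Lemma derive_gam_dens F i k x : D x -> i != k ->
  derive (gam_dens F i k) x (ecoord R i) =
  coexact_coef * F (ilift k) imax * (rho (ilift k) x * rho_headV x / 2)
  - F (ilift k) (ilift i) * rho (ilift i) x *
    (rho (ilift k) x * rho_headV x / (2 * rho imax x)).
Proof.
move=> Dx ik.
have dT a b c := differentiable_rho_cubic a b c x Dx.
have dcT e a b c : differentiable (fun y => e * rho_cubic a b c y) x.
  by apply: differentiable_mul => //; exact: differentiable_cst.
have dlog : \sum_(l < m) - dqcoord (ilift l) (ecoord R i) / (2 * qcoord (ilift l) x)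
    = - (2 * qcoord (ilift i) x)^-1.
  rewrite (bigD1 i) //= big1 ?addr0 => [|l /negPf li]; last first.
    by rewrite dqcoord_ecoord_lift li oppr0 mul0r.
  by rewrite dqcoord_ecoord_lift eqxx mulN1r.
have dNcT e a b c : differentiable (fun y => - (e * rho_cubic a b c y)) x.
  exact: differentiable_opp.
rewrite /gam_dens !derive_add ?derive_opp ?derive_mull //; last first.
  exact: differentiable_add.
rewrite !derive_rho_cubic // dlog !dqcoord_ecoord_lift dqcoord_ecoord_max eqxx.
rewrite eq_sym (negPf ik) /= /rho_cubic -!(rho_sqr _ _ Dx).
have := rho_neq0 (ilift i) x Dx; have := rho_neq0 imax x Dx.
have := rho_neq0 (ilift k) x Dx.
move: (rho (ilift i) x) (rho imax x) (rho (ilift k) x) (rho_headV x).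
by move=> ri rn rk q hk hn hi; field; rewrite hi hn hk.
Qed.

Lemma div_gam_dens F k x : (2 <= m)%N -> F^T = - F -> D x ->
  \sum_i derive (gam_dens F i k) x (ecoord R i) =
  - (rho (ilift k) x * rho_headV x / (2 * rho imax x)) * mxrho F (ilift k) x.
Proof.
move=> hm hF Dx.
have gam_dens_diag : gam_dens F k k = fun _ => 0.
  by apply: funext => y; apply/eqP; rewrite -eqNr -gam_dens_skew.
have sum_neqk (G : 'I_m -> R) : \sum_(i | i != k) G i = \sum_i G i - G k.
  by rewrite [X in _ = X - _](bigD1 k) //= addrC addrK.
rewrite (bigD1 k) //= gam_dens_diag derive_cst add0r.
rewrite (eq_bigr _ (fun i ik => derive_gam_dens F i k x Dx ik)) sumrB !sum_neqk.
rewrite sumr_const card_ord skew_mx_diag // !mul0r subr0 -mulr_suml.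
set P := rho (ilift k) x * rho_headV x.
have -> : coexact_coef * F (ilift k) imax * (P / 2) *+ m
          - coexact_coef * F (ilift k) imax * (P / 2) = - F (ilift k) imax * (P / 2).
  by rewrite -mulr_natr -(mulN1r (F _ _)) -(coexact_coefE hm); ring.
rewrite /mxrho big_ord_recr_lift /=.
have := rho_neq0 imax x Dx.
by move: (rho imax x) P (\sum_(i < m) _) => rn p s rn0; field.
Qed.

Lemma gam_skew F y : F^T = - F -> (gam F y)^T = - gam F y.
Proof.
move=> hF; have dens_skew : (\matrix_(i, k) gam_dens F i k y)^T =
    - \matrix_(i, k) gam_dens F i k y.
  by apply/matrixP => i k; rewrite !mxE gam_dens_skew.
by rewrite /gam linearZ /= !trmx_mul gmat_sym mulmxA dens_skew mulmxN mulNmx scalerN.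
Qed.

Lemma rho_laurent_gam_dens F i k : rho_laurent (gam_dens F i k).
Proof.
have LQ : rho_laurent rho_headV :=
  rho_laurent_prod _ _ (fun l => rho_laurentV (ilift l)).
have LT c1 c2 c3 : rho_laurent (rho_cubic c1 c2 c3) := rho_laurentM (rho_laurentM
  (rho_laurentM (rho_laurent_rho c1) (rho_laurent_rho c2)) (rho_laurent_rho c3)) LQ.
apply: (rho_laurent_eq (rho_laurentD (rho_laurentD
  (rho_laurentM (rho_laurentC (coexact_coef * F (ilift k) imax))
                (LT (ilift i) (ilift i) (ilift k)))
  (rho_laurentM (rho_laurentC (- (coexact_coef * F (ilift i) imax)))
                (LT (ilift k) (ilift k) (ilift i))))
  (rho_laurentM (rho_laurentC (F (ilift k) (ilift i))) (LT imax (ilift k) (ilift i))))).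
by move=> y _ /=; rewrite /gam_dens; ring.
Qed.

Lemma rho_laurent_gam F i j : rho_laurent (fun y => gam F y i j).
Proof.
apply: (rho_laurent_eq (rho_laurentM
  (rho_laurent_prod _ _ (fun a => rho_laurent_rho a)) (rho_laurent_sum _ _
  (fun l => rho_laurentM (rho_laurent_sum _ _
  (fun k => rho_laurentM (rho_laurent_gmat i k) (rho_laurent_gam_dens F k l)))
  (rho_laurent_gmat l j))))).
move=> y _; rewrite /gam; set G := gmat y; clearbody G.
rewrite !mxE; congr (_ * _); apply: eq_bigr => l _; rewrite !mxE.
by congr (_ * _); apply: eq_bigr => k _; rewrite !mxE.
Qed.

Lemma two_form_gam F : F^T = - F -> two_form (gam F).
Proof.
move=> hF; split=> [x _|i j]; first exact: gam_skew.
exact/rho_laurent_smooth/rho_laurent_gam.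
Qed.

Lemma raise_gam F x i k : D x ->
  Num.sqrt (\det (gmat x)) * (invmx (gmat x) *m gam F x *m invmx (gmat x)) i k =
  gam_dens F i k x.
Proof.
move=> Dx; have gU := gmat_unit x Dx; rewrite sqrt_det_gmat // /gam.
set G := gmat x; set p := \prod_a rho a x.
rewrite -scalemxAr -scalemxAl !mulmxA mulVmx // mul1mx -mulmxA mulmxV // mulmx1.
by rewrite !mxE mulrA mulVf ?mul1r // gt_eqF // prod_rho_gt0.
Qed.

Lemma codiff2_gam F x j : (2 <= m)%N -> F^T = - F -> D x ->
  codiff2 (gam F) x 0 j =
  \sum_k gmat x j k * (rho (ilift k) x * mxrho F (ilift k) x / 2).
Proof.
move=> hm hF Dx; rewrite /codiff2 mxE -sumrN; apply: eq_bigr => k _.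
have raise i : derive (fun y => Num.sqrt (\det (gmat y)) *
      (invmx (gmat y) *m gam F y *m invmx (gmat y)) i k) x (ecoord R i) =
    derive (gam_dens F i k) x (ecoord R i).
  apply: near_eq_derive; apply: filterS (near_chart_dom x Dx) => y Dy.
  exact: raise_gam.
rewrite (eq_bigr _ (fun i _ => raise i)) div_gam_dens // sqrt_det_gmat // invrK.
have := rho_neq0 imax x Dx; rewrite -(prod_rho_headV x Dx).
move: (\prod_a rho a x) (rho_headV x) (gmat x j k) (rho (ilift k) x) (mxrho F _ x).
by move=> p q g r f; rewrite mulf_eq0 negb_or => /andP[p0 q0]; field; rewrite p0 q0.
Qed.

Lemma gmat_lower F x j : F^T = - F -> D x ->
  \sum_k gmat x j k * (rho (ilift k) x * mxrho F (ilift k) x / 2) =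
  \sum_a dsqrtq (ecoord R j) x 0 a * mxrho F a x.
Proof.
move=> hF Dx.
have push a :
    \sum_k dqcoord a (ecoord R k) * (rho (ilift k) x * mxrho F (ilift k) x / 2) =
    rho a x * mxrho F a x / 2.
  rewrite sum_dqcoord_ecoord; case: (unliftP imax a) => [l ->|->].
    by rewrite dqcoord_lift mxE.
  have := bilin_skew_eq0 _ F (sqrtq x) hF.
  rewrite dqcoord_max quad_sqrtq big_ord_recr_lift /= => skew0.
  under eq_bigr do rewrite mxE.
  rewrite -mulr_suml; move: skew0.
  by move: (\sum_(i < m) _) (rho imax x * _) => s t st0; lra.
transitivity (\sum_a dqcoord a (ecoord R j) / qcoord a x * (rho a x * mxrho F a x / 2)).
  under eq_bigr => k _ do rewrite gmat_dqcoord mulr_suml.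
  rewrite exchange_big /=; apply: eq_bigr => a _.
  by rewrite -push mulr_sumr; apply: eq_bigr => k _; ring.
apply: eq_bigr => a _; rewrite dsqrtqE -rho_sqr //.
by have := rho_neq0 a x Dx; move: (rho a x) => r r0; field.
Qed.

Lemma Tform_skew_coexact F x : (2 <= m)%N -> F^T = - F -> D x ->
  Tform F x = codiff2 (gam F) x.
Proof.
move=> hm hF Dx; apply/rowP => j.
rewrite codiff2_gam // gmat_lower // Tform_tangent // [LHS]mxE bilin_mxE.
by apply: eq_bigr => a _; congr (_ * _); apply: eq_bigr => b _; rewrite sqrtqE.
Qed.

End ProbabilitySimplex.

Theorem mainTheorem1 (R : realType) (m : nat) (hm : (2 <= m)%N)
    (V S F : 'M[R]_m.+1)
    (hV : V = S + F) (hS : S^T = S) (hF : F^T = - F) :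
  let U := fun x : 'rV[R]_m => 2^-1 * (sqrtq x *m S *m (sqrtq x)^T) 0 0 in
  (smooth_on (chart_dom (R:=R) (m:=m)) U /\
   forall x, chart_dom x -> Tform S x = dfun U x) /\
  exists gamma : 'rV[R]_m -> 'M[R]_m,
    two_form gamma /\
    (forall x, chart_dom x -> Tform F x = codiff2 gamma x) /\
    (forall x, chart_dom x -> Tform V x = dfun U x + codiff2 gamma x).
Proof.
move=> U; split.
  split; first exact: rho_laurent_smooth (potential_rho_laurent S).
  by move=> x Dx; exact: Tform_sym_exact.
exists (gam F); split; first exact: two_form_gam.
split=> x Dx; first exact: Tform_skew_coexact.
by rewrite hV Tform_add Tform_sym_exact // Tform_skew_coexact.
Qed.
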